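(* There exist positive bounded operators $A,B\colon\ell^2\to\ell^2$ such that $AB-BA=I+N$, where $N$ is a nilpotent operator of nil-index $3$ (i.e. $N^3=0$ and $N^2\neq0$). Furthermore, there is an absolute constant $K>0$ such that for every $\varepsilon\in(0,1)$ the operators $A$, $B$ (positive, with $AB-BA=I+N$ and $N$ nilpotent of nil-index $3$) can be chosen so that $\|A\|\leq K\varepsilon^{-3}$, $\|B\|\leq K\varepsilon^{-3}$ and $\|N\|\leq K\varepsilon$.
   Context: $\ell^2$ is the real Hilbert lattice of square-summable sequences with the coordinatewise order; an operator on $\ell^2$ is positive if it maps nonnegative sequences to nonnegative sequences. $I$ is the identity operator and $\|\cdot\|$ the operator norm. *)

From Stdlib Require Import Reals.
From Coquelicot Require Import Coquelicot.
Open Scope R_scope.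

Definition seqR := nat -> R.

Definition l2 (x : seqR) : Prop := ex_series (fun n => (x n) ^ 2).

Definition l2norm (x : seqR) : R := sqrt (Series (fun n => (x n) ^ 2)).

(* An operator on ell^2, represented by a map on sequences whose behaviour
   is only relevant on ell^2. *)
Definition op := seqR -> seqR.

Definition bounded_op (T : op) : Prop :=
  (forall x, l2 x -> l2 (T x)) /\
  (forall (x y : seqR) (a b : R), l2 x -> l2 y ->
     T (fun n => a * x n + b * y n) = (fun n => a * T x n + b * T y n)) /\
  (exists C : R, forall x, l2 x -> l2norm (T x) <= C * l2norm x).

Definition positive_op (T : op) : Prop :=
  forall x, l2 x -> (forall n, 0 <= x n) -> forall n, 0 <= T x n.

Definition opnorm_le (T : op) (M : R) : Prop :=
  forall x, l2 x -> l2norm (T x) <= M * l2norm x.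

Definition commutator_eq (A B N : op) : Prop :=
  forall x, l2 x -> (fun n => A (B x) n - B (A x) n) = (fun n => x n + N x n).

Definition nilpotent_index3 (N : op) : Prop :=
  (forall x, l2 x -> N (N (N x)) = (fun _ => 0)) /\
  (exists x, l2 x /\ N (N x) <> (fun _ => 0)).

From Stdlib Require Import Reals Lra Lia FunctionalExtensionality.
From Coquelicot Require Import Coquelicot.
Open Scope R_scope.

(* Split the indices into blocks of four.  [A0 x = (x 2n + x (2n+1))_n] and
   [B0] spreads [y 2q, y (2q+1)] over block [q] as
   [(y 2q, y 2q, y 2q + y (2q+1), y (2q+1))]; both are positive and
   [A0 B0 - B0 A0 = I + N0], where [N0] acts inside each block as a nilpotent
   matrix of index 3.  Conjugating by a positive diagonal weight that is
   constant along block positions preserves positivity and the commutator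
   relation, scales the entries of [N0] down to [t] or [t^2], and costs at most
   a factor [t^-2] on the norms of [A0] and [B0]. *)

Lemma Un_cv_le_upper_bound (u : nat -> R) l M :
  Un_cv u l -> (forall n, u n <= M) -> l <= M.
Proof.
  intros Hu HM. destruct (Rle_dec l M) as [h|h]; [exact h|].
  destruct (Hu (l - M)) as [N HN]; [lra|].
  specialize (HN N (le_n N)). specialize (HM N). unfold R_dist in HN.
  apply Rabs_def2 in HN. lra.
Qed.

Lemma ex_series_of_bounded_partial_sums (f : nat -> R) M :
  (forall n, 0 <= f n) -> (forall N, sum_f_R0 f N <= M) ->
  ex_series f /\ Series f <= M.
Proof.
  intros Hf HM.
  assert (Hgrow : Un_growing (fun N => sum_f_R0 f N)).
  { intro n. simpl. specialize (Hf (S n)). lra. }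
  assert (Hub : has_ub (fun N => sum_f_R0 f N)).
  { exists M. intros y [n ->]. apply HM. }
  destruct (growing_cv _ Hgrow Hub) as [l Hl].
  split; [apply ex_series_Reals_1; exists l; exact Hl|].
  rewrite (is_series_unique f l) by (apply is_series_Reals; exact Hl).
  exact (Un_cv_le_upper_bound _ _ _ Hl HM).
Qed.

Lemma sum_f_R0_le_Series (f : nat -> R) N :
  (forall n, 0 <= f n) -> ex_series f -> sum_f_R0 f N <= Series f.
Proof.
  intros Hf Hex. apply sum_incr; [|exact Hf].
  apply is_series_Reals, Series_correct, Hex.
Qed.

Lemma sum_f_R0_le_mono (f : nat -> R) N N' :
  (forall n, 0 <= f n) -> (N <= N')%nat -> sum_f_R0 f N <= sum_f_R0 f N'.
Proof.
  intros Hf HN. induction HN as [|N' _ IH]; [lra|].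
  rewrite tech5. specialize (Hf (S N')). lra.
Qed.

(* [T] is bounded on [l2] with [||T x||^2 <= C ||x||^2], witnessed on partial
   sums so that no limit has to be taken when such bounds are composed. *)
Definition sq_dominated (T : op) (C : R) : Prop :=
  0 <= C /\
  forall x, l2 x -> forall N, exists M,
    sum_f_R0 (fun n => T x n ^ 2) N <= C * sum_f_R0 (fun n => x n ^ 2) M.


Lemma sq_dominated_l2 T C x : sq_dominated T C -> l2 x ->
  l2 (T x) /\ Series (fun n => T x n ^ 2) <= C * Series (fun n => x n ^ 2).
Proof.
  intros [HC HT] Hx. apply ex_series_of_bounded_partial_sums.
  - intro; apply pow2_ge_0.
  - intro N. destruct (HT x Hx N) as [M HM].
    eapply Rle_trans; [exact HM|]. apply Rmult_le_compat_l; [exact HC|].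
    apply sum_f_R0_le_Series; [intro; apply pow2_ge_0|exact Hx].
Qed.

Lemma sq_dominated_l2norm T C x : sq_dominated T C -> l2 x ->
  l2norm (T x) <= sqrt C * l2norm x.
Proof.
  intros HT Hx. destruct (sq_dominated_l2 T C x HT Hx) as [_ H].
  unfold l2norm. rewrite <- sqrt_mult_alt by apply HT.
  apply sqrt_le_1_alt, H.
Qed.

Lemma sq_dominated_le T C C' : sq_dominated T C -> C <= C' -> sq_dominated T C'.
Proof.
  intros [HC HT] HCC'. split; [lra|]. intros x Hx N.
  destruct (HT x Hx N) as [M HM]. exists M.
  eapply Rle_trans; [exact HM|]. apply Rmult_le_compat_r; [|exact HCC'].
  apply cond_pos_sum. intro; apply pow2_ge_0.
Qed.

Lemma sq_dominated_ext T T' C :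
  (forall x n, T x n = T' x n) -> sq_dominated T C -> sq_dominated T' C.
Proof.
  intros E [HC HT]. split; [exact HC|]. intros x Hx N.
  destruct (HT x Hx N) as [M HM]. exists M.
  eapply Rle_trans; [|exact HM]. right. apply sum_eq. intros. rewrite E. reflexivity.
Qed.

Definition op_comp (S T : op) : op := fun x => S (T x).
Definition op_add (S T : op) : op := fun x n => S x n + T x n.
Definition mult_op (w : nat -> R) : op := fun x n => w n * x n.
Definition decimate (l : nat) : op := fun x n => x (2 * n + l)%nat.
Definition upsample (d : nat) : op :=
  fun y n => if Nat.eqb (n mod 4) d then y (n / 4)%nat else 0.

Lemma sq_dominated_comp S T C1 C2 :
  sq_dominated S C1 -> sq_dominated T C2 -> sq_dominated (op_comp S T) (C1 * C2).
Proof.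
  intros HS HT. split; [apply Rmult_le_pos; [apply HS|apply HT]|].
  intros x Hx N.
  destruct (sq_dominated_l2 T C2 x HT Hx) as [HTx _].
  destruct (proj2 HS (T x) HTx N) as [M HM].
  destruct (proj2 HT x Hx M) as [M' HM'].
  exists M'. unfold op_comp. eapply Rle_trans; [exact HM|].
  rewrite Rmult_assoc. apply Rmult_le_compat_l; [apply HS|exact HM'].
Qed.

Lemma sq_dominated_add S T C1 C2 :
  sq_dominated S C1 -> sq_dominated T C2 ->
  sq_dominated (op_add S T) (2 * C1 + 2 * C2).
Proof.
  intros [H1 HS] [H2 HT]. split; [lra|]. intros x Hx N.
  destruct (HS x Hx N) as [M1 HM1]. destruct (HT x Hx N) as [M2 HM2].
  exists (max M1 M2). unfold op_add.
  apply Rle_trans with (2 * sum_f_R0 (fun n => S x n ^ 2) N +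
                        2 * sum_f_R0 (fun n => T x n ^ 2) N).
  { rewrite !scal_sum, <- plus_sum. apply sum_Rle. intros n _.
    pose proof (pow2_ge_0 (S x n - T x n)). nra. }
  assert (P1 : sum_f_R0 (fun n => x n ^ 2) M1 <= sum_f_R0 (fun n => x n ^ 2) (max M1 M2))
    by (apply sum_f_R0_le_mono; [intro; apply pow2_ge_0|lia]).
  assert (P2 : sum_f_R0 (fun n => x n ^ 2) M2 <= sum_f_R0 (fun n => x n ^ 2) (max M1 M2))
    by (apply sum_f_R0_le_mono; [intro; apply pow2_ge_0|lia]).
  nra.
Qed.

Lemma sq_dominated_mult w W :
  (forall n, Rabs (w n) <= W) -> sq_dominated (mult_op w) (W ^ 2).
Proof.
  intros HW. split; [apply pow2_ge_0|]. intros x Hx N. exists N.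
  unfold mult_op. rewrite scal_sum. apply sum_Rle. intros n _.
  rewrite Rpow_mult_distr, <- (pow2_abs (w n)), (Rmult_comm (x n ^ 2)).
  apply Rmult_le_compat_r; [apply pow2_ge_0|].
  pose proof (Rabs_pos (w n)). specialize (HW n). nra.
Qed.

Lemma sq_dominated_decimate l : sq_dominated (decimate l) 1.
Proof.
  split; [lra|]. intros x Hx N. exists (2 * N + l)%nat. rewrite Rmult_1_l.
  unfold decimate. induction N as [|N IH].
  - change (x (2 * 0 + l)%nat ^ 2 <= sum_f_R0 (fun n => x n ^ 2) (2 * 0 + l)).
    replace (2 * 0 + l)%nat with l by lia.
    destruct l as [|l]; [simpl; lra|]. rewrite tech5.
    pose proof (cond_pos_sum (fun n => x n ^ 2) l (fun n => pow2_ge_0 (x n))). lra.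
  - rewrite tech5. replace (2 * S N + l)%nat with (S (S (2 * N + l))) by lia.
    rewrite !tech5.
    pose proof (pow2_ge_0 (x (S (2 * N + l)))).
    replace (2 * S N + l)%nat with (S (S (2 * N + l))) by lia. lra.
Qed.

Lemma div_mod_4 q r : (r < 4)%nat -> ((4 * q + r) / 4 = q)%nat /\ ((4 * q + r) mod 4 = r)%nat.
Proof.
  intros Hr. split.
  - symmetry. apply Nat.div_unique with r; lia.
  - symmetry. apply Nat.mod_unique with q; lia.
Qed.

Lemma upsample_val d y q r : (r < 4)%nat ->
  upsample d y (4 * q + r)%nat = if Nat.eqb r d then y q else 0.
Proof. intros Hr. unfold upsample. destruct (div_mod_4 q r Hr) as [-> ->]. reflexivity. Qed.

Lemma sq_dominated_upsample d : (d < 4)%nat -> sq_dominated (upsample d) 1.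
Proof.
  intros Hd. split; [lra|]. intros y Hy N.
  assert (Hblock : forall q, sum_f_R0 (fun n => upsample d y n ^ 2) (4 * q + 3) =
                             sum_f_R0 (fun n => y n ^ 2) q).
  { induction q as [|q IH].
    - simpl. unfold upsample. simpl.
      destruct d as [|[|[|[|]]]]; simpl; try lia; ring.
    - replace (4 * S q + 3)%nat with (S (S (S (S (4 * q + 3))))) by lia.
      rewrite !tech5, IH.
      replace (S (4 * q + 3)) with (4 * S q + 0)%nat by lia.
      replace (S (4 * S q + 0)) with (4 * S q + 1)%nat by lia.
      replace (S (4 * S q + 1)) with (4 * S q + 2)%nat by lia.
      replace (S (4 * S q + 2)) with (4 * S q + 3)%nat by lia.
      rewrite !upsample_val by lia.
      destruct d as [|[|[|[|]]]]; simpl; try lia; ring. }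
  exists N. rewrite Rmult_1_l, <- Hblock.
  apply sum_f_R0_le_mono; [intro; apply pow2_ge_0|lia].
Qed.

Definition linear_op (T : op) : Prop := forall x y a b,
  T (fun n => a * x n + b * y n) = (fun n => a * T x n + b * T y n).

Definition nonneg_preserving (T : op) : Prop :=
  forall x, (forall n, 0 <= x n) -> forall n, 0 <= T x n.

Lemma linear_comp S T : linear_op S -> linear_op T -> linear_op (op_comp S T).
Proof. intros HS HT x y a b. unfold op_comp. rewrite HT, HS. reflexivity. Qed.

Lemma linear_add S T : linear_op S -> linear_op T -> linear_op (op_add S T).
Proof.
  intros HS HT x y a b. apply functional_extensionality. intro n.
  unfold op_add. rewrite HS, HT. ring.
Qed.

Lemma linear_mult w : linear_op (mult_op w).
Proof. intros x y a b. apply functional_extensionality. intro n. unfold mult_op. ring. Qed.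

Lemma linear_decimate l : linear_op (decimate l).
Proof. intros x y a b. reflexivity. Qed.

Lemma linear_upsample d : linear_op (upsample d).
Proof.
  intros x y a b. apply functional_extensionality. intro n.
  unfold upsample. destruct (Nat.eqb _ _); ring.
Qed.

Lemma nonneg_preserving_comp S T :
  nonneg_preserving S -> nonneg_preserving T -> nonneg_preserving (op_comp S T).
Proof. intros HS HT x Hx n. apply HS, HT, Hx. Qed.

Lemma nonneg_preserving_add S T :
  nonneg_preserving S -> nonneg_preserving T -> nonneg_preserving (op_add S T).
Proof.
  intros HS HT x Hx n. unfold op_add.
  specialize (HS x Hx n). specialize (HT x Hx n). lra.
Qed.

Lemma nonneg_preserving_mult w : (forall n, 0 <= w n) -> nonneg_preserving (mult_op w).
Proof. intros Hw x Hx n. apply Rmult_le_pos; [apply Hw|apply Hx]. Qed.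

Lemma nonneg_preserving_decimate l : nonneg_preserving (decimate l).
Proof. intros x Hx n. apply Hx. Qed.

Lemma nonneg_preserving_upsample d : nonneg_preserving (upsample d).
Proof. intros x Hx n. unfold upsample. destruct (Nat.eqb _ _); [apply Hx|lra]. Qed.

Lemma bounded_op_of_sq_dominated T C :
  sq_dominated T C -> linear_op T -> bounded_op T.
Proof.
  intros HT Hlin. split; [|split].
  - intros x Hx. apply (sq_dominated_l2 T C x HT Hx).
  - intros x y a b _ _. apply Hlin.
  - exists (sqrt C). intros x Hx. apply sq_dominated_l2norm; assumption.
Qed.

Lemma opnorm_le_of_sq_dominated T C M :
  sq_dominated T C -> 0 <= M -> C <= M ^ 2 -> opnorm_le T M.
Proof.
  intros HT HM HC x Hx. eapply Rle_trans; [apply sq_dominated_l2norm; eassumption|].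
  apply Rmult_le_compat_r; [apply sqrt_pos|].
  rewrite <- (sqrt_pow2 M HM). apply sqrt_le_1_alt, HC.
Qed.

Definition A0 : op := op_add (decimate 0) (decimate 1).

Definition B0 : op :=
  op_add (op_comp (upsample 0) (decimate 0))
 (op_add (op_comp (upsample 1) (decimate 0))
 (op_add (op_comp (upsample 2) (decimate 0))
 (op_add (op_comp (upsample 2) (decimate 1))
         (op_comp (upsample 3) (decimate 1))))).

(* [n - 2] and [n - 1] are only evaluated for [n mod 4 = 2], where the
   truncated subtraction is exact. *)
Definition N0 : op := fun y n =>
  if Nat.eqb (n mod 4) 0 then - y (n + 1)%nat
  else if Nat.eqb (n mod 4) 2 then - (y (n - 2)%nat + y (n - 1)%nat + y (n + 1)%nat)
  else 0.

Lemma block_decomp n : exists q r, (r < 4)%nat /\ n = (4 * q + r)%nat.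
Proof.
  exists (n / 4)%nat, (n mod 4)%nat. split.
  - apply Nat.mod_upper_bound; lia.
  - apply Nat.div_mod; lia.
Qed.

(* Rewrites every index [y i] with [i] in block [q] into the form [4 * q + r]. *)
Ltac block_index y q := repeat match goal with |- context [y ?i] =>
  lazymatch i with
  | (4 * q + _)%nat => fail
  | _ => first [ replace i with (4 * q + 0)%nat by lia
               | replace i with (4 * q + 1)%nat by lia
               | replace i with (4 * q + 2)%nat by lia
               | replace i with (4 * q + 3)%nat by lia ]
  end end.

Lemma B0_block y q :
  B0 y (4 * q + 0)%nat = y (2 * q + 0)%nat /\
  B0 y (4 * q + 1)%nat = y (2 * q + 0)%nat /\
  B0 y (4 * q + 2)%nat = y (2 * q + 0)%nat + y (2 * q + 1)%nat /\
  B0 y (4 * q + 3)%nat = y (2 * q + 1)%nat.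
Proof.
  unfold B0, op_add, op_comp. rewrite !upsample_val by lia.
  cbn [Nat.eqb]. unfold decimate. repeat split; ring.
Qed.

Lemma N0_block y q :
  N0 y (4 * q + 0)%nat = - y (4 * q + 1)%nat /\
  N0 y (4 * q + 1)%nat = 0 /\
  N0 y (4 * q + 2)%nat = - (y (4 * q + 0)%nat + y (4 * q + 1)%nat + y (4 * q + 3)%nat) /\
  N0 y (4 * q + 3)%nat = 0.
Proof.
  unfold N0. rewrite !(fun r H => proj2 (div_mod_4 q r H)) by lia.
  cbn [Nat.eqb]. block_index y q. repeat split; ring.
Qed.

Lemma A0_B0_commutator y n : A0 (B0 y) n - B0 (A0 y) n = y n + N0 y n.
Proof.
  destruct (block_decomp n) as [q [r [Hr ->]]].
  unfold A0 at 1, op_add at 1, decimate.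
  destruct r as [|[|[|[|]]]]; try lia.
  - replace (2 * (4 * q + 0) + 0)%nat with (4 * (2 * q) + 0)%nat by lia.
    replace (2 * (4 * q + 0) + 1)%nat with (4 * (2 * q) + 1)%nat by lia.
    destruct (B0_block y (2 * q)) as (-> & -> & _).
    destruct (B0_block (A0 y) q) as (-> & _).
    destruct (N0_block y q) as (-> & _).
    unfold A0, op_add, decimate. block_index y q. ring.
  - replace (2 * (4 * q + 1) + 0)%nat with (4 * (2 * q) + 2)%nat by lia.
    replace (2 * (4 * q + 1) + 1)%nat with (4 * (2 * q) + 3)%nat by lia.
    destruct (B0_block y (2 * q)) as (_ & _ & -> & ->).
    destruct (B0_block (A0 y) q) as (_ & -> & _).
    destruct (N0_block y q) as (_ & -> & _).
    unfold A0, op_add, decimate. block_index y q. ring.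
  - replace (2 * (4 * q + 2) + 0)%nat with (4 * (2 * q + 1) + 0)%nat by lia.
    replace (2 * (4 * q + 2) + 1)%nat with (4 * (2 * q + 1) + 1)%nat by lia.
    destruct (B0_block y (2 * q + 1)) as (-> & -> & _).
    destruct (B0_block (A0 y) q) as (_ & _ & -> & _).
    destruct (N0_block y q) as (_ & _ & -> & _).
    unfold A0, op_add, decimate. block_index y q. ring.
  - replace (2 * (4 * q + 3) + 0)%nat with (4 * (2 * q + 1) + 2)%nat by lia.
    replace (2 * (4 * q + 3) + 1)%nat with (4 * (2 * q + 1) + 3)%nat by lia.
    destruct (B0_block y (2 * q + 1)) as (_ & _ & -> & ->).
    destruct (B0_block (A0 y) q) as (_ & _ & _ & ->).
    destruct (N0_block y q) as (_ & _ & _ & ->).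
    unfold A0, op_add, decimate. block_index y q. ring.
Qed.

Lemma N0_cube y n : N0 (N0 (N0 y)) n = 0.
Proof.
  destruct (block_decomp n) as [q [r [Hr ->]]].
  destruct (N0_block (N0 (N0 y)) q) as (E0 & E1 & E2 & E3).
  destruct (N0_block (N0 y) q) as (F0 & F1 & F2 & F3).
  destruct (N0_block y q) as (_ & G1 & _ & G3).
  destruct r as [|[|[|[|]]]]; try lia.
  - rewrite E0, F1. ring.
  - exact E1.
  - rewrite E2, F0, F1, F3, G1. ring.
  - exact E3.
Qed.

Definition similar (w : nat -> R) (T : op) : op :=
  op_comp (mult_op w) (op_comp T (mult_op (fun n => / w n))).

Section Similarity.

Variable w : nat -> R.
Hypothesis w_neq0 : forall n, w n <> 0.

Lemma mult_op_inv_mult z : mult_op (fun n => / w n) (mult_op w z) = z.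
Proof.
  apply functional_extensionality. intro n. unfold mult_op.
  field. apply w_neq0.
Qed.

Lemma similar_commutator A B N :
  (forall y n, A (B y) n - B (A y) n = y n + N y n) ->
  commutator_eq (similar w A) (similar w B) (similar w N).
Proof.
  intros HAB x _. apply functional_extensionality. intro n.
  unfold similar, op_comp. rewrite !mult_op_inv_mult.
  unfold mult_op at 1 2 3. rewrite <- Rmult_minus_distr_l, HAB.
  unfold mult_op. field. apply w_neq0.
Qed.

Lemma similar_square N x :
  similar w N (similar w N x) = mult_op w (N (N (mult_op (fun n => / w n) x))).
Proof. unfold similar, op_comp. rewrite mult_op_inv_mult. reflexivity. Qed.

Lemma similar_cube_eq0 N :
  (forall y n, N (N (N y)) n = 0) ->
  forall x, similar w N (similar w N (similar w N x)) = (fun _ => 0).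
Proof.
  intros HN x. apply functional_extensionality. intro n.
  unfold similar, op_comp. rewrite !mult_op_inv_mult. unfold mult_op at 1.
  rewrite HN. ring.
Qed.

Lemma linear_similar T : linear_op T -> linear_op (similar w T).
Proof. intros HT. apply linear_comp, linear_comp; auto using linear_mult. Qed.

Lemma sq_dominated_similar T C W V :
  (forall n, Rabs (w n) <= W) -> (forall n, Rabs (/ w n) <= V) ->
  sq_dominated T C -> sq_dominated (similar w T) (W ^ 2 * (C * V ^ 2)).
Proof.
  intros HW HV HT. apply sq_dominated_comp; [apply sq_dominated_mult, HW|].
  apply sq_dominated_comp; [exact HT|apply sq_dominated_mult, HV].
Qed.

End Similarity.

Lemma nonneg_preserving_similar w T :
  (forall n, 0 < w n) -> nonneg_preserving T -> nonneg_preserving (similar w T).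
Proof.
  intros Hw HT. apply nonneg_preserving_comp.
  - apply nonneg_preserving_mult. intro n. apply Rlt_le, Hw.
  - apply nonneg_preserving_comp; [exact HT|].
    apply nonneg_preserving_mult. intro n. apply Rlt_le, Rinv_0_lt_compat, Hw.
Qed.

Lemma linear_A0 : linear_op A0.
Proof. apply linear_add; apply linear_decimate. Qed.

Lemma linear_B0 : linear_op B0.
Proof.
  unfold B0. repeat first [apply linear_add | apply linear_comp
                          | apply linear_upsample | apply linear_decimate].
Qed.

Lemma linear_N0 : linear_op N0.
Proof.
  intros x y a b. apply functional_extensionality. intro n. unfold N0.
  destruct (Nat.eqb _ 0); [|destruct (Nat.eqb _ 2)]; ring.
Qed.

Lemma nonneg_preserving_A0 : nonneg_preserving A0.
Proof. apply nonneg_preserving_add; apply nonneg_preserving_decimate. Qed.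

Lemma nonneg_preserving_B0 : nonneg_preserving B0.
Proof.
  unfold B0. repeat first [apply nonneg_preserving_add | apply nonneg_preserving_comp
               | apply nonneg_preserving_upsample | apply nonneg_preserving_decimate].
Qed.

Lemma sq_dominated_A0 : sq_dominated A0 4.
Proof.
  eapply sq_dominated_le; [apply sq_dominated_add; apply sq_dominated_decimate|lra].
Qed.

Lemma sq_dominated_B0 : sq_dominated B0 46.
Proof.
  eapply sq_dominated_le.
  - unfold B0. repeat apply sq_dominated_add;
      (apply sq_dominated_comp; [apply sq_dominated_upsample; lia|apply sq_dominated_decimate]).
  - lra.
Qed.

(* Conjugating by these weights multiplies the entry [(i, j)] of [N0] by
   [weight i / weight j]; every nonzero entry of [N0] becomes [t] or [t^2]. *)
Definition block_weight (t : R) (r : nat) : R :=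
  match r with 0%nat => / t | 2%nat => 1 | _ => / (t * t) end.

Definition weight (t : R) (n : nat) : R := block_weight t (n mod 4).

Definition N_weighted (t : R) : op :=
  op_add
    (op_comp (upsample 0) (op_comp (mult_op (fun _ => - t)) (op_comp (decimate 0) (decimate 1))))
    (op_comp (upsample 2)
      (op_add (op_comp (mult_op (fun _ => - t)) (op_comp (decimate 0) (decimate 0)))
      (op_add (op_comp (mult_op (fun _ => - (t * t))) (op_comp (decimate 0) (decimate 1)))
              (op_comp (mult_op (fun _ => - (t * t))) (op_comp (decimate 1) (decimate 1)))))).

Definition e1 : seqR := fun n => if Nat.eqb n 1 then 1 else 0.

Lemma l2_e1 : l2 e1.
Proof.
  refine (proj1 (ex_series_of_bounded_partial_sums _ 1 _ _)); [intro; apply pow2_ge_0|].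
  intro N. induction N as [|[|N] IH]; unfold e1 in *; simpl in *; lra.
Qed.

Section Weighted.

Variable t : R.
Hypothesis t_range : 0 < t <= 1.

Lemma weight_bounds n : 1 <= weight t n <= / (t * t).
Proof.
  assert (H1 : 1 <= / t) by (rewrite <- Rinv_1; apply Rinv_le_contravar; lra).
  assert (H2 : / t <= / (t * t)) by (apply Rinv_le_contravar; nra).
  unfold weight. destruct (n mod 4)%nat as [|[|[|]]]; simpl; lra.
Qed.

Lemma weight_pos n : 0 < weight t n.
Proof. pose proof (weight_bounds n). lra. Qed.

Lemma weight_neq0 n : weight t n <> 0.
Proof. apply Rgt_not_eq, weight_pos. Qed.

Lemma Rabs_weight_le n : Rabs (weight t n) <= / (t * t).
Proof. pose proof (weight_bounds n). rewrite Rabs_right; lra. Qed.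

Lemma Rabs_inv_weight_le n : Rabs (/ weight t n) <= 1.
Proof.
  pose proof (weight_bounds n). rewrite Rabs_right.
  - rewrite <- Rinv_1. apply Rinv_le_contravar; lra.
  - apply Rle_ge, Rlt_le, Rinv_0_lt_compat. lra.
Qed.

Lemma weight_block q r : (r < 4)%nat -> weight t (4 * q + r)%nat = block_weight t r.
Proof. intros Hr. unfold weight. rewrite (proj2 (div_mod_4 q r Hr)). reflexivity. Qed.

Lemma similar_N0_eq x n : similar (weight t) N0 x n = N_weighted t x n.
Proof.
  destruct (block_decomp n) as [q [r [Hr ->]]].
  unfold similar, op_comp. unfold mult_op at 1.
  destruct (N0_block (mult_op (fun n => / weight t n) x) q) as (E0 & E1 & E2 & E3).
  destruct r as [|[|[|[|]]]]; try lia; [rewrite E0 | rewrite E1 | rewrite E2 | rewrite E3];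
  unfold N_weighted, op_add, op_comp; rewrite !upsample_val by lia; cbn [Nat.eqb];
  unfold mult_op, decimate; block_index x q; rewrite ?weight_block by lia;
  cbn [block_weight]; field; lra.
Qed.

Lemma sq_dominated_N_weighted : sq_dominated (N_weighted t) (22 * t ^ 2).
Proof.
  assert (Ht : forall n : nat, Rabs (- t) <= t)
    by (intros; rewrite Rabs_Ropp, Rabs_right; lra).
  assert (Htt : forall n : nat, Rabs (- (t * t)) <= t)
    by (intros; rewrite Rabs_Ropp, Rabs_right; nra).
  eapply sq_dominated_le.
  - unfold N_weighted. repeat first
      [ apply sq_dominated_add | apply sq_dominated_comp
      | apply sq_dominated_upsample; lia | apply sq_dominated_decimate
      | apply sq_dominated_mult, Ht | apply sq_dominated_mult, Htt ].
  - lra.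
Qed.

Lemma similar_N0_square_e1_neq0 :
  similar (weight t) N0 (similar (weight t) N0 e1) <> (fun _ => 0).
Proof.
  rewrite similar_square by apply weight_neq0. intro H.
  assert (E := f_equal (fun f => f (4 * 0 + 2)%nat) H). cbv beta in E.
  unfold mult_op at 1 in E.
  destruct (N0_block (N0 (mult_op (fun n => / weight t n) e1)) 0) as (_ & _ & -> & _) in E.
  destruct (N0_block (mult_op (fun n => / weight t n) e1) 0) as (-> & -> & _ & ->) in E.
  unfold mult_op, weight, e1 in E. simpl in E. rewrite Rinv_inv in E. nra.
Qed.

Lemma similar_norm_bound c :
  0 <= c <= 10000 -> (/ (t * t)) ^ 2 * (c * 1 ^ 2) <= (100 / t ^ 3) ^ 2.
Proof.
  intros Hc. assert (Hs : 1 <= / t) by (rewrite <- Rinv_1; apply Rinv_le_contravar; lra).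
  replace (/ (t * t)) with (/ t * / t) by (field; lra).
  replace (100 / t ^ 3) with (100 * (/ t) ^ 3) by (field; lra).
  set (s := / t) in *.
  replace ((100 * s ^ 3) ^ 2) with ((s * s) ^ 2 * (10000 * (s * s))) by ring.
  apply Rmult_le_compat_l; [apply pow2_ge_0|nra].
Qed.

Lemma weighted_pair_spec :
  exists A B N : op,
    bounded_op A /\ bounded_op B /\ bounded_op N /\
    positive_op A /\ positive_op B /\
    commutator_eq A B N /\ nilpotent_index3 N /\
    opnorm_le A (100 / t ^ 3) /\ opnorm_le B (100 / t ^ 3) /\ opnorm_le N (100 * t).
Proof.
  pose proof weight_neq0 as Hw.
  pose proof (sq_dominated_similar _ _ _ _ _ Rabs_weight_le Rabs_inv_weight_le sq_dominated_A0)
    as HA.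
  pose proof (sq_dominated_similar _ _ _ _ _ Rabs_weight_le Rabs_inv_weight_le sq_dominated_B0)
    as HB.
  assert (HN : sq_dominated (similar (weight t) N0) (22 * t ^ 2)).
  { apply (sq_dominated_ext (N_weighted t)); [|exact sq_dominated_N_weighted].
    intros x n. symmetry. apply similar_N0_eq. }
  assert (H100 : 0 <= 100 / t ^ 3) by (apply Rlt_le, Rdiv_lt_0_compat, pow_lt; lra).
  exists (similar (weight t) A0), (similar (weight t) B0), (similar (weight t) N0).
  split; [apply (bounded_op_of_sq_dominated _ _ HA), linear_similar, linear_A0|].
  split; [apply (bounded_op_of_sq_dominated _ _ HB), linear_similar, linear_B0|].
  split; [apply (bounded_op_of_sq_dominated _ _ HN), linear_similar, linear_N0|].
  split; [intros x _; apply (nonneg_preserving_similar _ _ weight_pos nonneg_preserving_A0)|].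
  split; [intros x _; apply (nonneg_preserving_similar _ _ weight_pos nonneg_preserving_B0)|].
  split; [apply (similar_commutator _ Hw), A0_B0_commutator|].
  split; [split; [intros x _; apply (similar_cube_eq0 _ Hw), N0_cube|]|].
  { exists e1. split; [exact l2_e1|exact similar_N0_square_e1_neq0]. }
  split; [apply (opnorm_le_of_sq_dominated _ _ _ HA H100), similar_norm_bound; lra|].
  split; [apply (opnorm_le_of_sq_dominated _ _ _ HB H100), similar_norm_bound; lra|].
  apply (opnorm_le_of_sq_dominated _ _ _ HN); nra.
Qed.

End Weighted.

Theorem theorem3p2 :
  (exists A B N : op,
      bounded_op A /\ bounded_op B /\ bounded_op N /\
      positive_op A /\ positive_op B /\
      commutator_eq A B N /\ nilpotent_index3 N) /\
  (exists K : R, 0 < K /\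
     forall eps : R, 0 < eps < 1 ->
       exists A B N : op,
         bounded_op A /\ bounded_op B /\ bounded_op N /\
         positive_op A /\ positive_op B /\
         commutator_eq A B N /\ nilpotent_index3 N /\
         opnorm_le A (K / eps ^ 3) /\ opnorm_le B (K / eps ^ 3) /\
         opnorm_le N (K * eps)).
Proof.
  split.
  - destruct (weighted_pair_spec 1 ltac:(lra)) as (A & B & N & H).
    exists A, B, N. tauto.
  - exists 100. split; [lra|]. intros eps Heps.
    apply weighted_pair_spec. lra.
Qed.
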